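(* Let $S$ be a nearly simple monoid whose kernel contains a minimal idempotent. Then $S$ is completely regular.
   Context: The kernel of a semigroup is its unique minimal two-sided ideal. A monoid is nearly simple if it has a unique minimal two-sided ideal and that ideal contains all non-invertible elements. An idempotent $p$ ($pp=p$) is minimal if minimal for the order $p\le q\iff p=pq=qp$ on idempotents. A semigroup is completely regular if every element $a$ admits $x$ with $a=axa$ and $ax=xa$. Semigroups considered have no zero element. *)

Section Semigroups.
Variable T : Type.
Variable mul : T -> T -> T.

Definition associative : Prop :=
  forall a b c : T, mul a (mul b c) = mul (mul a b) c.

Definition is_unit (e : T) : Prop := forall a : T, mul e a = a /\ mul a e = a.

Definition is_zero (z : T) : Prop := forall a : T, mul z a = z /\ mul a z = z.

Definition two_sided_ideal (I : T -> Prop) : Prop :=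
  (exists a, I a) /\ forall s a : T, I a -> I (mul s a) /\ I (mul a s).

Definition minimal_ideal (K : T -> Prop) : Prop :=
  two_sided_ideal K /\
  forall J : T -> Prop, two_sided_ideal J -> (forall x, J x -> K x) ->
    forall x, K x -> J x.

Definition is_kernel (K : T -> Prop) : Prop :=
  minimal_ideal K /\
  forall K' : T -> Prop, minimal_ideal K' -> forall x, K' x <-> K x.

Definition invertible (e a : T) : Prop :=
  exists b : T, mul a b = e /\ mul b a = e.

Definition nearly_simple (e : T) (K : T -> Prop) : Prop :=
  is_kernel K /\ forall a : T, ~ invertible e a -> K a.

Definition idempotent (p : T) : Prop := mul p p = p.

Definition idem_le (p q : T) : Prop := p = mul p q /\ p = mul q p.

Definition minimal_idempotent (p : T) : Prop :=
  idempotent p /\ forall q : T, idempotent q -> idem_le q p -> q = p.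

Definition completely_regular : Prop :=
  forall a : T, exists x : T, a = mul (mul a x) a /\ mul a x = mul x a.

End Semigroups.

Arguments associative {T}. Arguments is_unit {T}. Arguments is_zero {T}.
Arguments two_sided_ideal {T}. Arguments minimal_ideal {T}. Arguments is_kernel {T}.
Arguments invertible {T}. Arguments nearly_simple {T}. Arguments idempotent {T}.
Arguments idem_le {T}. Arguments minimal_idempotent {T}. Arguments completely_regular {T}.

(* Since p lies in the kernel K, minimality of K gives K = S p S, so every
   non-invertible a is s p t.  The element g = p t s p of the corner p S p
   again generates K, so p = u g v, and h = p v p u p satisfies h g h = h;
   hence g h and h g are idempotents below p, equal to p by minimality.
   Thus g is a unit of the group p K p, and x = s h h t is an inverse of a
   commuting with a. *)

From Stdlib Require Import Classical.

Section CompletelyRegular.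

Variable T : Type.
Variable mul : T -> T -> T.
Hypothesis mulA : associative mul.

Local Infix "*" := mul.

Definition completely_regular_elt (a : T) : Prop :=
  exists x : T, a = a * x * a /\ a * x = x * a.

Lemma minimal_ideal_sandwich (K : T -> Prop) (y z : T) :
  minimal_ideal mul K -> K y -> K z -> exists u v, z = u * y * v.
Proof.
  intros [[_ K_ideal] K_min] Ky Kz.
  apply (K_min (fun z => exists u v, z = u * y * v)); [split | | exact Kz].
  - exists (y * y * y), y, y. reflexivity.
  - intros s w [u [v ->]]. split.
    + exists (s * u), v. rewrite !mulA. reflexivity.
    + exists u, (v * s). rewrite !mulA. reflexivity.
  - intros w [u [v ->]].
    apply (K_ideal v (u * y)), (K_ideal u y), Ky.
Qed.

Lemma invertible_completely_regular_elt (e a : T) :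
  is_unit mul e -> invertible mul e a -> completely_regular_elt a.
Proof.
  intros e_unit [b [ab_e ba_e]].
  exists b. rewrite ab_e, ba_e. split; [symmetry; apply e_unit | reflexivity].
Qed.

Lemma sandwich_completely_regular_elt (p s t h : T) :
  p * h = h -> h * p = h ->
  p * t * s * p * h = p -> h * (p * t * s * p) = p ->
  completely_regular_elt (s * p * t).
Proof.
  intros ph hp gh hg.
  assert (ph_r : forall x, p * (h * x) = h * x)
    by (intro x; rewrite mulA, ph; reflexivity).
  assert (hp_r : forall x, h * (p * x) = h * x)
    by (intro x; rewrite mulA, hp; reflexivity).
  assert (gh_r : forall x, p * (t * (s * (p * (h * x)))) = p * x)
    by (intro x; rewrite !mulA, gh; reflexivity).
  assert (hg_r : forall x, h * (p * (t * (s * (p * x)))) = p * x)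
    by (intro x; rewrite !mulA in hg; rewrite !mulA, hg; reflexivity).
  exists (s * h * h * t).
  assert (ax : s * p * t * (s * h * h * t) = s * (h * t)).
  { rewrite <- !mulA, <- (ph_r (h * t)), gh_r, ph_r. reflexivity. }
  assert (xa : s * h * h * t * (s * p * t) = s * (h * t)).
  { rewrite <- !mulA, <- (hp_r (t * (s * (p * t)))), hg_r, hp_r. reflexivity. }
  split.
  - rewrite ax, <- !mulA, <- (hp_r (t * (s * (p * t)))), hg_r. reflexivity.
  - rewrite ax, xa. reflexivity.
Qed.

Section MinimalIdempotent.

Variable p : T.
Hypothesis p_min : minimal_idempotent mul p.

Lemma minimal_idempotent_eq (q : T) :
  idempotent mul q -> p * q = q -> q * p = q -> q = p.
Proof.
  intros q_idem pq qp. apply p_min; [exact q_idem | split; congruence].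
Qed.

Lemma corner_inverse (g u v : T) :
  p * g = g -> g * p = g -> u * g * v = p ->
  exists h, p * h = h /\ h * p = h /\ g * h = p /\ h * g = p.
Proof.
  intros pg gp ugv.
  destruct p_min as [pp _].
  assert (pp_r : forall x, p * (p * x) = p * x)
    by (intro x; rewrite mulA, pp; reflexivity).
  assert (pg_r : forall x, p * (g * x) = g * x)
    by (intro x; rewrite mulA, pg; reflexivity).
  assert (gp_r : forall x, g * (p * x) = g * x)
    by (intro x; rewrite mulA, gp; reflexivity).
  assert (ugv_r : forall x, u * (g * (v * x)) = p * x)
    by (intro x; rewrite !mulA, ugv; reflexivity).
  set (h := p * v * p * u * p).
  assert (ph : p * h = h) by (unfold h; rewrite !mulA, pp; reflexivity).
  assert (hp : h * p = h) by (unfold h; rewrite <- !mulA, pp; reflexivity).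
  assert (hgh : h * g * h = h).
  { unfold h. rewrite <- !mulA, pg_r, gp_r, ugv_r, !pp_r. reflexivity. }
  exists h. split; [exact ph | split; [exact hp | split]];
    apply minimal_idempotent_eq; unfold idempotent.
  - rewrite <- mulA, (mulA h), hgh. reflexivity.
  - rewrite mulA, pg. reflexivity.
  - rewrite <- mulA, hp. reflexivity.
  - rewrite mulA, hgh. reflexivity.
  - rewrite mulA, ph. reflexivity.
  - rewrite <- mulA, gp. reflexivity.
Qed.

End MinimalIdempotent.

End CompletelyRegular.

Theorem corollary2p9 (T : Type) (mul : T -> T -> T) (e : T)
  (Hassoc : associative mul) (Hunit : is_unit mul e)
  (Hnozero : forall z : T, ~ is_zero mul z)
  (K : T -> Prop) (HS : nearly_simple mul e K)
  (Hmin : exists p : T, K p /\ minimal_idempotent mul p) :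
  completely_regular mul.
Proof.
  destruct HS as [[K_min _] noninvertible_K].
  destruct Hmin as [p [Kp p_min]].
  intro a.
  destruct (classic (invertible mul e a)) as [a_inv | a_noninv].
  { exact (invertible_completely_regular_elt T mul e a Hunit a_inv). }
  destruct (minimal_ideal_sandwich T mul Hassoc K p a K_min Kp
              (noninvertible_K a a_noninv)) as [s [t ->]].
  set (g := mul (mul (mul p t) s) p).
  assert (Kg : K g) by exact (proj1 (proj2 (proj1 K_min) (mul (mul p t) s) p Kp)).
  destruct (minimal_ideal_sandwich T mul Hassoc K g p K_min Kg Kp) as [u [v ugv]].
  assert (pg : mul p g = g) by (unfold g; rewrite !Hassoc, (proj1 p_min); reflexivity).
  assert (gp : mul g p = g)
    by (unfold g; rewrite <- !Hassoc, (proj1 p_min); reflexivity).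
  destruct (corner_inverse T mul Hassoc p p_min g u v pg gp (eq_sym ugv))
    as [h [ph [hp [gh hg]]]].
  exact (sandwich_completely_regular_elt T mul Hassoc p s t h ph hp gh hg).
Qed.
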